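(* Let $k\ge3$ and $l\ge1$ be integers, and $G_{k,l}(T):=1-T+T^{lk+1}-T^{k(l+1)}$. If $\alpha\in\mathbb{C}$ satisfies $|\alpha|=1$ and $G_{k,l}(\alpha)=0$, then $\alpha^k=1$ or $\alpha^{k-2}=1$. *)

From mathcomp Require Import all_boot all_order all_algebra.
From mathcomp Require Import complex.
From mathcomp Require Import Rstruct.
Set Implicit Arguments. Unset Strict Implicit. Unset Printing Implicit Defensive.
Import Order.TTheory GRing.Theory Num.Theory.
Local Open Scope ring_scope.

Notation Cplx := (complex.complex Rdefinitions.R).

Definition G (k l : nat) : {poly Cplx} :=
  1 - 'X + 'X^(l * k + 1) - 'X^(k * (l + 1)).

From mathcomp Require Import all_boot all_order all_algebra.
From mathcomp Require Import complex Rstruct.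
From mathcomp Require Import ring.
Import Order.TTheory GRing.Theory Num.Theory.
Set Implicit Arguments. Unset Strict Implicit. Unset Printing Implicit Defensive.
Local Open Scope ring_scope.

(* With x = alpha^(lk) and p = alpha^(k-2), the root equation reads
   1 - a + x a - x p a^2 = 0.  Since G has real coefficients and conj alpha =
   alpha^-1, alpha^-1 is a root too; clearing denominators gives a second
   relation x p a^2 - x p a + p a - 1 = 0.  Eliminating x between the two
   yields (1 - p)(1 - p a^2) = 0, i.e. alpha^(k-2) = 1 or alpha^k = 1. *)

Lemma reciprocal_relation (F : fieldType) (a x p : F) :
  a != 0 -> x != 0 -> p != 0 ->
  1 - a^-1 + x^-1 * a^-1 - x^-1 * p^-1 * a^-2 = 0 ->
  x * p * a ^+ 2 - x * p * a + p * a - 1 = 0.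
Proof.
move=> a0 x0 p0 h.
have -> : x * p * a ^+ 2 - x * p * a + p * a - 1 =
    x * p * a ^+ 2 * (1 - a^-1 + x^-1 * a^-1 - x^-1 * p^-1 * a^-2).
  by field; apply/and3P.
by rewrite h mulr0.
Qed.

Lemma eliminate_x (R : comPzRingType) (a x p : R) :
  1 - a + x * a - x * p * a ^+ 2 = 0 ->
  x * p * a ^+ 2 - x * p * a + p * a - 1 = 0 ->
  (1 - p) * (1 - p * a ^+ 2) = 0.
Proof.
move=> e1 e2.
have -> : (1 - p) * (1 - p * a ^+ 2) =
    p * (a - 1) * (1 - a + x * a - x * p * a ^+ 2)
    - (1 - p * a) * (x * p * a ^+ 2 - x * p * a + p * a - 1) by ring.
by rewrite e1 e2 !mulr0 subr0.
Qed.

Lemma self_reciprocal_roots (F : idomainType) (a x p : F) :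
  1 - a + x * a - x * p * a ^+ 2 = 0 ->
  x * p * a ^+ 2 - x * p * a + p * a - 1 = 0 ->
  p = 1 \/ p * a ^+ 2 = 1.
Proof.
move=> e1 e2; move/eqP: (eliminate_x e1 e2).
by rewrite mulf_eq0 !subr_eq0 => /orP [/eqP <-|/eqP <-]; [left|right].
Qed.

Lemma horner_G (k l : nat) (a : Cplx) : (2 <= k)%N ->
  (G k l).[a] = 1 - a + a ^+ (l * k) * a - a ^+ (l * k) * a ^+ (k - 2) * a ^+ 2.
Proof.
move=> hk; have ekl : (k * (l + 1) = l * k + (k - 2) + 2)%N.
  by rewrite -addnA subnK // mulnDr muln1 mulnC.
by rewrite /G !hornerE ekl !exprD expr1 expr2 mulrA.
Qed.

Lemma conj_horner_G (k l : nat) (a : Cplx) : ((G k l).[a])^* = (G k l).[a^*].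
Proof. by rewrite /G !hornerE !(rmorphB, rmorphD, rmorph1, rmorphXn). Qed.

Theorem lemma14 (k l : nat) (hk : (3 <= k)%N) (hl : (1 <= l)%N)
  (alpha : Cplx) (habs : `|alpha| = 1) (hroot : (G k l).[alpha] = 0) :
  alpha ^+ k = 1 \/ alpha ^+ (k - 2) = 1.
Proof.
have hk2 : (2 <= k)%N by apply: ltnW.
have a0 : alpha != 0 by rewrite -normr_eq0 habs oner_eq0.
have conj_inv : alpha^* = alpha^-1 by rewrite invC_norm habs expr1n invr1 mul1r.
have hroot_inv : (G k l).[alpha^-1] = 0.
  by rewrite -conj_inv -conj_horner_G hroot rmorph0.
have e1 := hroot; rewrite horner_G // in e1.
have e2 := hroot_inv; rewrite horner_G // !exprVn in e2.
have {}e2 := @reciprocal_relation Cplx alpha _ _ a0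
  (expf_neq0 (l * k) a0) (expf_neq0 (k - 2) a0) e2.
have ek : alpha ^+ k = alpha ^+ (k - 2) * alpha ^+ 2 by rewrite -exprD subnK.
by case: (self_reciprocal_roots e1 e2) => h; [right|left; rewrite ek].
Qed.
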